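(* Let $k$ be a nonperfect field of characteristic $2$, let $a\in k\setminus k^2$, let $G=PGL_2$ and, writing $\bar A$ for the image in $PGL_2$ of $A\in GL_2$, let $u=\overline{\begin{pmatrix}0&a\\1&0\end{pmatrix}}\in G(k)$ and $U=\langle u\rangle$. Then $U$ is $G$-irreducible over $k$ (in particular $G$-completely reducible over $k$), but $U$ is not $G$-completely reducible.
   Context: For a connected reductive $k$-group $G$, a closed subgroup $H$ is $G$-completely reducible over $k$ if whenever $H$ is contained in a $k$-parabolic subgroup $P$ of $G$, $H$ is contained in some $k$-Levi subgroup of $P$; $H$ is $G$-irreducible over $k$ if it lies in no proper $k$-parabolic subgroup. ''$G$-completely reducible'' means $G$-completely reducible over $\bar k$. *)

From HB Require Import structures.
From mathcomp Require Import all_boot all_order all_algebra.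
Set Implicit Arguments. Unset Strict Implicit. Unset Printing Implicit Defensive.
Import GRing.Theory.
Local Open Scope ring_scope.

Section PGL2.
Variable F : fieldType.

(* A subgroup of PGL_2(F) is represented by the set of all its lifts to GL_2(F),
   i.e. a predicate on 2x2 matrices (stable under nonzero scalars). *)
Definition subgrp := 'M[F]_2 -> Prop.

Definition GL2 : subgrp := fun A => A \in unitmx.

(* Borel subgroup: the stabiliser of the line spanned by a nonzero row vector v
   (matrices act on row vectors on the right). *)
Definition borel (v : 'rV[F]_2) : subgrp :=
  fun A => A \in unitmx /\ stablemx v A.

Definition torus (v w : 'rV[F]_2) : subgrp :=
  fun A => A \in unitmx /\ stablemx v A /\ stablemx w A.

(* F-parabolic subgroups of PGL_2: G itself, and the Borel subgroups defined
   over F, i.e. stabilisers of F-rational points of P^1. *)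
Definition parabolic (P : subgrp) : Prop :=
  (forall A, P A <-> GL2 A) \/
  exists v : 'rV[F]_2, v != 0 /\ forall A, P A <-> borel v A.

Definition levi (P L : subgrp) : Prop :=
  ((forall A, P A <-> GL2 A) /\ (forall A, L A <-> GL2 A)) \/
  exists v w : 'rV[F]_2, \rank (col_mx v w) = 2%N /\
    (forall A, P A <-> borel v A) /\ (forall A, L A <-> torus v w A).

Definition proper_sub (P : subgrp) : Prop := ~ (forall A, P A <-> GL2 A).

Definition contained (H P : subgrp) : Prop := forall A, H A -> P A.

Definition PGL2_cr (H : subgrp) : Prop :=
  forall P, parabolic P -> contained H P ->
    exists L, levi P L /\ contained H L.

Definition PGL2_irreducible (H : subgrp) : Prop :=
  forall P, parabolic P -> contained H P -> ~ proper_sub P.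

Definition cyc_gen (u : 'M[F]_2) : subgrp :=
  fun A => exists (n : nat) (c : F), c != 0 /\ A = c *: u ^+ n.

End PGL2.

Definition u_mat (k : fieldType) (a : k) : 'M[k]_2 :=
  \matrix_(i < 2, j < 2)
    if ((i : nat) == 0%N) && ((j : nat) == 1%N) then a
    else if ((i : nat) == 1%N) && ((j : nat) == 0%N) then 1 else 0.

From Pilot Require Import Defs.
From HB Require Import structures.
From mathcomp Require Import all_boot all_order all_algebra.
Set Implicit Arguments. Unset Strict Implicit. Unset Printing Implicit Defensive.
Import GRing.Theory.
Local Open Scope ring_scope.

(* Proof: a line of k^2 stable under u is an eigenline, and an eigenvalue l of
   u satisfies l^2 = a.  As a is not a square in k, no k-Borel subgroup contains
   U, so the only k-parabolic containing U is G itself.  Over an algebraically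
   closed field a = b^2, and in characteristic 2 squaring is injective, so u has
   the single eigenline [1 : b].  U lies in the Borel subgroup stabilising it,
   but in no maximal torus, which would need two independent u-stable lines. *)

Lemma det_mx2 (R : comNzRingType) (A : 'M[R]_2) :
  \det A = A 0 0 * A 1 1 - A 0 1 * A 1 0.
Proof.
rewrite (expand_det_row _ 0) !big_ord_recl big_ord0 /cofactor !det_mx11 !mxE /=.
rewrite expr0 expr1 mul1r mulN1r addr0 mulrN.
by congr (A _ _ * A _ _ - A _ _ * A _ _); apply: val_inj.
Qed.

Lemma mulmx_row2 (R : pzSemiRingType) n (v : 'rV[R]_2) (M : 'M[R]_(2, n)) j :
  (v *m M) 0 j = v 0 0 * M 0 j + v 0 1 * M 1 j.
Proof.
rewrite mxE !big_ord_recl big_ord0 addr0.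
by have -> : lift ord0 ord0 = 1 :> 'I_2 by apply: val_inj.
Qed.

Lemma row2P (R : Type) (v w : 'rV[R]_2) : v 0 0 = w 0 0 -> v 0 1 = w 0 1 -> v = w.
Proof.
move=> e0 e1; apply/matrixP => i [[|[|j]] lt_j2]; rewrite ord1.
- by rewrite (_ : Ordinal lt_j2 = 0) //; apply: val_inj.
- by rewrite (_ : Ordinal lt_j2 = 1) //; apply: val_inj.
- by [].
Qed.

Lemma pchar2_sqrf_inj (F : fieldType) :
  2%N \in [pchar F] -> injective (fun x : F => x ^+ 2).
Proof. by move=> F2; exact: fmorph_inj (pFrobenius_aut F2). Qed.

Lemma closed_sqrt (K : closedFieldType) (a : K) : exists b, b ^+ 2 = a.
Proof.
have /closed_rootP [b] : size ('X^2 - a%:P) != 1%N by rewrite size_XnsubC.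
by rewrite rootE !hornerE subr_eq0 => /eqP; exists b.
Qed.

Lemma map_u_mat (k K : fieldType) (iota : {rmorphism k -> K}) (a : k) :
  map_mx iota (u_mat a) = u_mat (iota a).
Proof.
by apply/matrixP => i j; rewrite !mxE; case: ifP => _; [|case: ifP => _];
  rewrite ?rmorph0 ?rmorph1.
Qed.

Section UMat.
Variables (F : fieldType) (a : F).

Lemma u_mat_in_cyc_gen : cyc_gen (u_mat a) (u_mat a).
Proof. by exists 1%N, 1; rewrite oner_neq0 scale1r expr1. Qed.

Lemma u_mat_unit : a != 0 -> u_mat a \in unitmx.
Proof.
by move=> a0; rewrite unitmxE det_mx2 !mxE /= mul0r sub0r mulr1 unitfE oppr_eq0.
Qed.

Lemma mulmx_u_mat (v : 'rV[F]_2) :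
  (v *m u_mat a) 0 0 = v 0 1 /\ (v *m u_mat a) 0 1 = a * v 0 0.
Proof. by rewrite !mulmx_row2 !mxE /= !mulr0 !mulr1 addr0 add0r mulrC. Qed.

Lemma stablemx_u_mat (v : 'rV[F]_2) : stablemx v (u_mat a) ->
  exists l, v 0 1 = l * v 0 0 /\ a * v 0 0 = l ^+ 2 * v 0 0.
Proof.
move/sub_rVP => [l vu]; have [vu0 vu1] := mulmx_u_mat v.
rewrite vu !mxE in vu0 vu1; exists l; split; first by rewrite -vu0.
by rewrite -vu1 expr2 -mulrA vu0.
Qed.

Lemma stablemx_u_mat_sqr (v : 'rV[F]_2) :
  v != 0 -> stablemx v (u_mat a) -> exists l, l ^+ 2 = a.
Proof.
move=> v_neq0 /stablemx_u_mat [l [v1 v0]]; exists l.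
have [v00|] := eqVneq (v 0 0) 0; last by move/mulIf; apply.
by move: v_neq0; rewrite (@row2P _ v 0) ?eqxx // mxE // v1 v00 mulr0.
Qed.

End UMat.

Lemma parabolic_cyc_u_mat_GL2 (F : fieldType) (a : F) (P : subgrp F) :
  ~ (exists b, b ^+ 2 = a) -> parabolic P -> contained (cyc_gen (u_mat a)) P ->
  forall A, P A <-> GL2 A.
Proof.
move=> a_nsq [//|[v [v_neq0 Pv]]] /(_ _ (u_mat_in_cyc_gen a)) /Pv [_ uv].
by case: a_nsq; exact: stablemx_u_mat_sqr uv.
Qed.

Definition point (F : fieldType) (b : F) : 'rV[F]_2 :=
  \row_(j < 2) if (j : nat) == 0%N then 1 else b.

Lemma point_neq0 (F : fieldType) (b : F) : point b != 0.
Proof. by apply/eqP => /matrixP/(_ 0 0); rewrite !mxE; exact/eqP/oner_neq0. Qed.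

Lemma point1 (F : fieldType) (b : F) : point b 0 1 = b.
Proof. by rewrite mxE. Qed.

Lemma proper_borel (F : fieldType) (v : 'rV[F]_2) :
  v 0 1 != 0 -> Defs.proper_sub (borel v).
Proof.
pose A : 'M[F]_2 := \matrix_(i, j) if (i == 0) && (j == 1) then 0 else 1.
have A_unit : A \in unitmx.
  by rewrite unitmxE det_mx2 !mxE /= mul1r mul0r subr0 unitr1.
move=> v1_neq0 /(_ A) [_ /(_ A_unit) [_ /sub_rVP [l vA]]].
have := mulmx_row2 v A 0; have := mulmx_row2 v A 1.
rewrite vA !mxE /= mulr0 add0r !mulr1 -{2}[v 0 1]mul1r => /(mulIf v1_neq0) ->.
rewrite mul1r -[X in X = _]addr0 => /addrI v1_eq0.
by rewrite -v1_eq0 eqxx in v1_neq0.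
Qed.

Section Char2.
Variables (F : fieldType) (a b : F).
Hypotheses (F2 : 2%N \in [pchar F]) (b_sqrt : b ^+ 2 = a) (b_neq0 : b != 0).

Lemma mulmx_point_u_mat : point b *m u_mat a = b *: point b.
Proof.
have [pu0 pu1] := mulmx_u_mat a (point b).
apply: row2P; [rewrite pu0 | rewrite pu1];
  by rewrite !mxE /= ?mulr1 // -b_sqrt expr2.
Qed.

Lemma cyc_u_mat_sub_borel : contained (cyc_gen (u_mat a)) (borel (point b)).
Proof.
have a_neq0 : a != 0 by rewrite -b_sqrt expf_neq0.
have stable_pow n : stablemx (point b) (u_mat a ^+ n).
  apply/sub_rVP; exists (b ^+ n); elim: n => [|n IHn].
    by rewrite expr0 mulmx1 scale1r.
  rewrite exprSr -mulmxE mulmxA IHn -scalemxAl mulmx_point_u_mat.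
  by rewrite scalerA exprSr.
move=> A [n [c [c_neq0 ->]]]; split.
  by rewrite unitmxZ ?unitfE // unitrX // u_mat_unit.
by rewrite -mul_scalar_mx stablemxM ?stablemxC ?stable_pow.
Qed.

Lemma stablemx_u_mat_sub_point (v : 'rV[F]_2) :
  stablemx v (u_mat a) -> (v <= point b)%MS.
Proof.
move=> /stablemx_u_mat [l [v1 v0]].
have -> : v = v 0 0 *: point b.
  apply: row2P; rewrite !mxE /= ?mulr1 // v1.
  have [->|v0_neq0] := eqVneq (v 0 0) 0; first by rewrite mulr0 mul0r.
  rewrite mulrC; congr (_ * _); apply: (pchar2_sqrf_inj F2) => /=.
  by apply: (mulIf v0_neq0); rewrite -v0 b_sqrt.
exact: scalemx_sub.
Qed.

Lemma cyc_u_mat_not_cr : ~ PGL2_cr (cyc_gen (u_mat a)).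
Proof.
have parab : parabolic (borel (point b)).
  by right; exists (point b); rewrite point_neq0.
move=> /(_ _ parab cyc_u_mat_sub_borel).
case=> L [[[P_GL2 _]|[v [w [rk_vw [_ L_torus]]]]] cyc_L].
  by apply: (proper_borel (v := point b)); rewrite ?point1.
have /cyc_L /L_torus [_ [v_stable w_stable]] := u_mat_in_cyc_gen a.
have v_pt := stablemx_u_mat_sub_point v_stable.
have w_pt := stablemx_u_mat_sub_point w_stable.
have : (\rank (col_mx v w) <= 1)%N.
  apply: leq_trans (mxrankS _) (rank_leq_row (point b)).
  by rewrite col_mx_sub v_pt w_pt.
by rewrite rk_vw.
Qed.

End Char2.

Theorem mainTheorem9 (k : fieldType) (a : k)
    (hchar : 2%N \in [pchar k])
    (hnonperfect : exists x : k, forall y : k, y ^+ 2 != x)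
    (ha : ~ exists b : k, b ^+ 2 = a) :
  PGL2_irreducible (cyc_gen (u_mat a)) /\
  PGL2_cr (cyc_gen (u_mat a)) /\
  (forall (K : closedFieldType) (iota : {rmorphism k -> K}),
      ~ PGL2_cr (cyc_gen (map_mx iota (u_mat a)))).
Proof.
(* hnonperfect is implied by ha and not needed. *)
have P_GL2 := parabolic_cyc_u_mat_GL2 ha.
split; [|split].
- by move=> P parP cycP; apply; exact: P_GL2.
- by move=> P parP cycP; exists P; split=> //; left; split=> //; exact: P_GL2.
move=> K iota; rewrite map_u_mat; have [b b_sqrt] := closed_sqrt (iota a).
apply: (cyc_u_mat_not_cr _ b_sqrt); first by rewrite (fmorph_pchar iota).
apply/eqP => b0; apply: ha; exists 0.
by apply: (fmorph_inj iota); rewrite rmorphXn rmorph0 -b0.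
Qed.
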